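(* Let $H$ be the adjacency matrix or the Laplacian matrix of an undirected weighted connected graph on vertices $1,\dots,n$, and suppose perfect state transfer from vertex $1$ to vertex $2$ occurs at time $t_0$, i.e. $|\langle 1|e^{it_0H}|2\rangle|=1$. Assume moreover that there exist $\theta\in\mathbb{R}$, an integer $0\le\ell\le n$, a real orthogonal matrix $\tilde Q$ and $\tilde D=\pi\,\mathrm{diag}(r_1,\dots,r_n)$ with $r_1\ge\cdots\ge r_\ell$ positive even integers and $r_{\ell+1}\ge\cdots\ge r_n$ positive odd integers, such that $t_0H=\tilde Q^T\tilde D\tilde Q+\theta I$ and the first two rows of $\tilde Q^T$ are $(x_1,\dots,x_n)$ and $(x_1,\dots,x_\ell,-x_{\ell+1},\dots,-x_n)$ with $x_1,\dots,x_n\ge 0$ (that is, such a decomposition exists with no trailing zero block). Let $H_0$ be a nonzero real symmetric $n\times n$ perturbation and $\hat H=t_0H+H_0$. Then, as $H_0\to 0$, \[ 1-|\langle 1|e^{i\hat H}|2\rangle|^2\ \le\ \frac{2\|H_0\|_F^2}{(\pi-\|H_0\|)^2}+\|H_0\|^2+O(\|H_0\|^3). \]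
   Context: $\|\cdot\|$ denotes the operator (spectral) norm and $\|\cdot\|_F$ the Frobenius norm. For a weighted graph with edge weights $w(j,k)$, the adjacency matrix $A$ has $(j,k)$ entry $w(j,k)$ if $j,k$ are adjacent and $0$ otherwise; the Laplacian is $L=R-A$ with $R$ the diagonal matrix of row sums of $A$. $\langle 1|M|2\rangle$ denotes the $(1,2)$ entry of a matrix $M$. *)

From HB Require Import structures.
From mathcomp Require Import all_boot all_order all_algebra.
From mathcomp Require Import all_classical all_reals all_analysis.
From mathcomp Require Import complex.

Set Implicit Arguments.
Unset Strict Implicit.
Unset Printing Implicit Defensive.

Import Order.TTheory GRing.Theory Num.Theory numFieldNormedType.Exports.
Local Open Scope ring_scope.
Local Open Scope classical_set_scope.

Section Defs.
Variables (R : realType) (n : nat).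

Definition cplx_mx (A : 'M[R]_n) : 'M[R[i]]_n :=
  map_mx (fun x : R => Complex x 0) A.

Definition expmi_partial (A : 'M[R]_n) (N : nat) : 'M[R[i]]_n :=
  \sum_(k < N) ((k`!)%:R)^-1 *: (Complex 0 1 *: cplx_mx A) ^+ k.

Definition expmi (A : 'M[R]_n) : 'M[R[i]]_n :=
  \matrix_(i, j) Complex (limn (fun N => @complex.Re R (expmi_partial A N i j)))
                         (limn (fun N => @complex.Im R (expmi_partial A N i j))).

Definition vnorm (v : 'cV[R]_n) : R := Num.sqrt (\sum_i v i 0 ^+ 2).

Definition frobenius (A : 'M[R]_n) : R :=
  Num.sqrt (\sum_i \sum_j A i j ^+ 2).

Definition opnorm (A : 'M[R]_n) : R :=
  sup [set vnorm (A *m v) | v in [set v : 'cV[R]_n | vnorm v = 1]].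

(** A is the adjacency matrix of an undirected weighted (simple) graph on
    vertex set 'I_n: symmetric, zero diagonal, nonnegative entries; j and k
    are adjacent iff A j k != 0 (i.e. the weight w(j,k) > 0). *)
Definition weighted_adjacency (A : 'M[R]_n) : Prop :=
  A^T = A /\ (forall i, A i i = 0) /\ (forall i j, 0 <= A i j).

Definition adj_connected (A : 'M[R]_n) : Prop :=
  forall j k : 'I_n, connect [rel a b | A a b != 0] j k.

Definition laplacian (A : 'M[R]_n) : 'M[R]_n :=
  diag_mx (\row_i \sum_j A i j) - A.

Definition cmod (z : R[i]) : R := ComplexField.Normc.normc z.

End Defs.

From HB Require Import structures.
From mathcomp Require Import all_boot all_order all_algebra.
From mathcomp Require Import all_classical all_reals all_analysis.
From mathcomp Require Import complex.
From mathcomp Require Import ring lra.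
Import Order.TTheory GRing.Theory Num.Theory numFieldNormedType.Exports.

Set Implicit Arguments.
Unset Strict Implicit.
Unset Printing Implicit Defensive.

Local Open Scope ring_scope.
Local Open Scope sesquilinear_scope.

(* On real symmetric matrices the map
   [A |-> e^{iA}] is 1-Lipschitz from the operator norm to the Euclidean norm:
   write [e^{iA} = (e^{iA/k})^k] and telescope, each of the [k] steps
   contributing [||A' - A||/k + O(1/k^2)].  Perfect state transfer makes column 2
   of [e^{i t0 H}] a unimodular multiple of [e_1]; the same column of the
   unitary [e^{i \hat H}] has norm 1, so [1 - |<1|e^{i \hat H}|2>|^2] is its mass
   off vertex 1, which is at most the squared distance between the two columns,
   hence at most [||H0||^2]. *)

Section TrigBounds.
Variable R : realType.

Lemma norm_sub0_le_derive (f df : R -> R) (L y : R) :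
  (forall x : R, is_derive x (1 : R) f (df x)) ->
  (forall c, `|c| <= `|y| -> `|df c| <= L) ->
  `|f y - f 0| <= L * `|y|.
Proof.
move=> f_df df_le.
have f_cont : continuous f.
  by move=> x; apply/differentiable_continuous/derivable1_diffP; apply: ex_derive; apply: f_df.
have f_df_in (a b x : R) : x \in `]a, b[%R -> is_derive x (1 : R) f (df x) by move=> _; apply: f_df.
have [y_ge0|y_lt0] := leP 0 y.
  have [c /andP[c_ge0 c_le] ->] :=
    MVT_segment y_ge0 (f_df_in 0 y) (continuous_subspaceT f_cont).
  rewrite normrM subr0 ler_wpM2r // df_le // !ger0_norm // (le_trans c_ge0 c_le).
have [c /andP[c_le c_le0] E] :=
  MVT_segment (ltW y_lt0) (f_df_in y 0) (continuous_subspaceT f_cont).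
rewrite -normrN opprB E normrM sub0r normrN ler_wpM2r // df_le //.
by rewrite ler0_norm ?(ltW y_lt0) // ler0_norm ?lerN2 // (le_trans _ (ltW y_lt0)).
Qed.

Lemma norm_sin_le (y : R) : `|sin y| <= `|y|.
Proof.
have := @norm_sub0_le_derive sin cos 1 y (@is_derive_sin R).
by rewrite sin0 subr0 mul1r; apply=> c _; exact: cos_max.
Qed.

Lemma norm_cos_sub1_le (y : R) : `|cos y - 1| <= `|y|.
Proof.
have := @norm_sub0_le_derive cos (fun x => - sin x) 1 y (@is_derive_cos R).
by rewrite cos0 mul1r; apply=> c _; rewrite normrN sin_max.
Qed.

Lemma norm_cos_sub1_le_sqr (y : R) : `|cos y - 1| <= y ^+ 2.
Proof.
have := @norm_sub0_le_derive cos (fun x => - sin x) `|y| y (@is_derive_cos R).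
rewrite cos0 -normrM -expr2 ger0_norm ?sqr_ge0 //; apply=> c c_le.
by rewrite normrN (le_trans (norm_sin_le c)).
Qed.

Lemma norm_sin_sub_le_sqr (y : R) : `|sin y - y| <= y ^+ 2.
Proof.
have sin_sub_df (x : R) : is_derive x (1 : R) (fun x => sin x - x) (cos x - 1) by apply: is_deriveB.
have := @norm_sub0_le_derive _ _ `|y| y sin_sub_df.
rewrite sin0 !subr0 -normrM -expr2 ger0_norm ?sqr_ge0 //; apply=> c c_le.
exact: le_trans (norm_cos_sub1_le c) c_le.
Qed.

End TrigBounds.

Section ComplexNumbers.
Variable R : realType.
Local Notation C := R[i].
Local Open Scope complex_scope.

Definition expi (x : R) : C := Complex (cos x) (sin x).

Definition normc2 (c : C) : R := complex.Re c ^+ 2 + complex.Im c ^+ 2.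

Lemma ReD (a b : C) : complex.Re (a + b) = complex.Re a + complex.Re b.
Proof. by case: a; case: b. Qed.

Lemma ImD (a b : C) : complex.Im (a + b) = complex.Im a + complex.Im b.
Proof. by case: a; case: b. Qed.

Lemma ReM (a b : C) :
  complex.Re (a * b) = complex.Re a * complex.Re b - complex.Im a * complex.Im b.
Proof. by case: a; case: b. Qed.

Lemma ImM (a b : C) :
  complex.Im (a * b) = complex.Re a * complex.Im b + complex.Im a * complex.Re b.
Proof. by case: a; case: b. Qed.

Lemma Re_sum (I : Type) (r : seq I) (f : I -> C) :
  complex.Re (\sum_(i <- r) f i) = \sum_(i <- r) complex.Re (f i).
Proof. exact: (big_morph _ ReD). Qed.

Lemma Im_sum (I : Type) (r : seq I) (f : I -> C) :
  complex.Im (\sum_(i <- r) f i) = \sum_(i <- r) complex.Im (f i).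
Proof. exact: (big_morph _ ImD). Qed.

Lemma normc2_ge0 (c : C) : 0 <= normc2 c.
Proof. by rewrite addr_ge0 ?sqr_ge0. Qed.

Lemma normc2M (a b : C) : normc2 (a * b) = normc2 a * normc2 b.
Proof. by rewrite /normc2 ReM ImM; ring. Qed.

Lemma normc2N (c : C) : normc2 (- c) = normc2 c.
Proof. by case: c => a b; rewrite /normc2 /=; ring. Qed.

Lemma normc2_eq0 (c : C) : normc2 c = 0 -> c = 0.
Proof.
case: c => a b; rewrite /normc2 /= => ab0.
have a0 : a ^+ 2 = 0 by apply/le_anti; rewrite sqr_ge0 -ab0 lerDl sqr_ge0.
have b0 : b ^+ 2 = 0 by move: ab0; rewrite a0 add0r.
by move/eqP: a0; move/eqP: b0; rewrite !sqrf_eq0 => /eqP-> /eqP->.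
Qed.

Lemma normc2_imag (t : R) : normc2 (Complex 0 t) = t ^+ 2.
Proof. by rewrite /normc2 /=; ring. Qed.

Lemma normc2E (c : C) : (normc2 c)%:C = c^* * c.
Proof.
by case: c => a b; apply/eqP; rewrite eq_complex /normc2 /=; apply/andP; split; apply/eqP; ring.
Qed.

Lemma cmod_sqr (c : C) : cmod c ^+ 2 = normc2 c.
Proof. by case: c => a b; rewrite /cmod /= sqr_sqrtr // addr_ge0 ?sqr_ge0. Qed.

Lemma expiD (x y : R) : expi (x + y) = expi x * expi y.
Proof.
by rewrite /expi cosD sinD; apply/eqP; rewrite eq_complex /=; apply/andP; split; apply/eqP; ring.
Qed.

Lemma expiMn (x : R) k : expi (x *+ k) = expi x ^+ k.
Proof.
elim: k => [|k IHk]; first by rewrite mulr0n expr0 /expi cos0 sin0.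
by rewrite mulrS expiD IHk exprS.
Qed.

Lemma normc2_expi (x : R) : normc2 (expi x) = 1.
Proof. by rewrite /normc2 /= cos2Dsin2. Qed.

Lemma normc2_expi_sub_le (y : R) : normc2 (expi y - 1 - Complex 0 y) <= 2 * y ^+ 4.
Proof.
have -> : normc2 (expi y - 1 - Complex 0 y) = (cos y - 1) ^+ 2 + (sin y - y) ^+ 2.
  by rewrite /normc2 /=; congr (_ ^+ 2 + _ ^+ 2); ring.
have sqr_le (a : R) : `|a| <= y ^+ 2 -> a ^+ 2 <= y ^+ 4.
  move=> a_le; rewrite -real_normK ?num_real // (exprM y 2 2).
  by rewrite lerXn2r ?nnegrE ?sqr_ge0.
rewrite mulr2n mulrDl mul1r.
by rewrite lerD // sqr_le ?norm_cos_sub1_le_sqr ?norm_sin_sub_le_sqr.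
Qed.

End ComplexNumbers.

Section ExpiSeries.
Variable R : realType.
Local Notation C := R[i].
Local Open Scope complex_scope.
Local Open Scope classical_set_scope.

Definition expi_partial (x : R) (N : nat) : C :=
  \sum_(k < N) (k`!%:R)^-1 * (Complex 0 x) ^+ k.

Lemma double_or_doubleS (k : nat) : exists m, k = m.*2 \/ k = m.*2.+1.
Proof.
exists k./2; case k_odd: (odd k); [right | left];
  by rewrite -{1}(odd_double_half k) k_odd.
Qed.

Lemma expr_imag (x : R) k : (Complex 0 x) ^+ k =
  if odd k then Complex 0 ((-1) ^+ k./2 * x ^+ k) else ((-1) ^+ k./2 * x ^+ k)%:C.
Proof.
have sqr_imag : (Complex 0 x) ^+ 2 = (- x ^+ 2)%:C.
  by rewrite expr2; apply/eqP; rewrite eq_complex /=; apply/andP; split; apply/eqP; ring.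
have [m [->|->]] := double_or_doubleS k.
  rewrite odd_double doubleK -mul2n exprM sqr_imag -rmorphXn /=; congr (_ %:C).
  by rewrite exprM -[- x ^+ 2]mulN1r exprMn.
rewrite oddS odd_double /= uphalf_double exprS -mul2n exprM sqr_imag -rmorphXn /=.
rewrite [x ^+ (2 * m).+1]exprS exprM -[- x ^+ 2]mulN1r exprMn.
by apply/eqP; rewrite eq_complex /=; apply/andP; split; apply/eqP; ring.
Qed.

Lemma Re_expi_partial (x : R) N : complex.Re (expi_partial x N) = series (cos_coeff x) N.
Proof.
rewrite /expi_partial Re_sum /series /= big_mkord; apply: eq_bigr => k _.
rewrite -[_%:R](rmorph_nat (real_complex R)) -fmorphV expr_imag /cos_coeff /=.
by case: (odd k); rewrite /= /real_complex_def /= ?(mulr0, mul0r, subr0, mul1r) // mulrC.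
Qed.

Lemma Im_expi_partial (x : R) N : complex.Im (expi_partial x N) = series (sin_coeff x) N.
Proof.
rewrite /expi_partial Im_sum /series /= big_mkord; apply: eq_bigr => k _.
rewrite -[_%:R](rmorph_nat (real_complex R)) -fmorphV expr_imag /sin_coeff /=.
have [m [->|->]] := double_or_doubleS k.
  by rewrite odd_double /= /real_complex_def /= !(mulr0, mul0r, addr0).
by rewrite oddS odd_double /= uphalf_double doubleK mulr0 addr0 mul1r mulrC.
Qed.

(* [R[i]] carries no topology here: convergence is componentwise, as in the
   definition of [expmi]. *)
Definition cvgC (u : nat -> C) (l : C) : Prop :=
  (complex.Re (u N) @[N --> \oo] --> complex.Re l) /\
  (complex.Im (u N) @[N --> \oo] --> complex.Im l).

Lemma cvgC_expi_partial (x : R) : cvgC (expi_partial x) (expi x).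
Proof.
split; [under eq_fun do rewrite Re_expi_partial | under eq_fun do rewrite Im_expi_partial].
  by rewrite /= cos.unlock; exact: is_cvg_series_cos_coeff.
by rewrite /= sin.unlock; exact: is_cvg_series_sin_coeff.
Qed.

Lemma cvgCMl (c : C) u l : cvgC u l -> cvgC (fun N => c * u N) (c * l).
Proof.
case=> cvg_Re cvg_Im; split; [under eq_fun do rewrite ReM | under eq_fun do rewrite ImM];
  rewrite ?ReM ?ImM; [apply: cvgB | apply: cvgD]; apply: cvgM => //; exact: cvg_cst.
Qed.

Lemma cvgC_sum (I : Type) (r : seq I) (u : I -> nat -> C) (l : I -> C) :
  (forall i, cvgC (u i) (l i)) ->
  cvgC (fun N => \sum_(i <- r) u i N) (\sum_(i <- r) l i).
Proof.
move=> cvg_u; elim: r => [|i r [IH_Re IH_Im]].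
  by split; under eq_fun do rewrite big_nil; rewrite big_nil; exact: cvg_cst.
have [cvg_Re cvg_Im] := cvg_u i.
split.
  by under eq_fun do rewrite big_cons ReD; rewrite big_cons ReD; apply: cvgD.
by under eq_fun do rewrite big_cons ImD; rewrite big_cons ImD; apply: cvgD.
Qed.

Lemma cvgC_lim (u : nat -> C) (l : C) : cvgC u l ->
  Complex (limn (fun N => complex.Re (u N))) (limn (fun N => complex.Im (u N))) = l.
Proof.
by case=> cvg_Re cvg_Im; apply/eqP; rewrite eq_complex (cvg_lim _ cvg_Re) ?(cvg_lim _ cvg_Im) ?eqxx.
Qed.

End ExpiSeries.

Section ConjDiag.
Variables (C : numClosedFieldType) (n : nat) (P : 'M[C]_n).

Definition conj_diag (f : 'I_n -> C) : 'M[C]_n := P^t* *m diag_mx (\row_j f j) *m P.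

Lemma eq_conj_diag (f g : 'I_n -> C) : f =1 g -> conj_diag f = conj_diag g.
Proof.
by move=> fg; rewrite /conj_diag; congr (_ *m diag_mx _ *m _); apply/rowP => j; rewrite !mxE fg.
Qed.

Lemma conj_diagZ (a : C) f : a *: conj_diag f = conj_diag (fun j => a * f j).
Proof.
rewrite /conj_diag scalemxAl scalemxAr; congr (_ *m _ *m _).
by apply/matrixP => i j; rewrite !mxE mulrnAr.
Qed.

Lemma conj_diagD f g : conj_diag f + conj_diag g = conj_diag (fun j => f j + g j).
Proof.
rewrite /conj_diag -mulmxDl -mulmxDr; congr (_ *m _ *m _).
by apply/matrixP => i j; rewrite !mxE mulrnDl.
Qed.

Lemma conj_diagB f g : conj_diag f - conj_diag g = conj_diag (fun j => f j - g j).
Proof.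
rewrite /conj_diag -mulmxBl -mulmxBr; congr (_ *m _ *m _).
by apply/matrixP => i j; rewrite !mxE mulrnBl.
Qed.

Lemma conj_diag_sum (I : Type) (r : seq I) (f : I -> 'I_n -> C) :
  \sum_(k <- r) conj_diag (f k) = conj_diag (fun j => \sum_(k <- r) f k j).
Proof.
elim: r => [|k r IHr]; last first.
  by rewrite big_cons IHr conj_diagD; apply: eq_conj_diag => j; rewrite big_cons.
rewrite big_nil /conj_diag (_ : diag_mx _ = 0) ?mulmx0 ?mul0mx //.
by apply/matrixP => i j; rewrite !mxE big_nil mul0rn.
Qed.

Lemma conj_diag_entry f a b : conj_diag f a b = \sum_j (P j a)^* * P j b * f j.
Proof. by rewrite mxE; apply: eq_bigr => j _; rewrite mul_mx_diag !mxE; ring. Qed.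

Hypothesis P_unitary : P \is unitarymx.

Lemma unitary_mul_adj : P *m P^t* = 1%:M.
Proof. exact/unitarymxP. Qed.

Lemma unitary_adj_mul : P^t* *m P = 1%:M.
Proof.
have /unitarymxP : P^t* \is unitarymx by rewrite trmxC_unitary.
by rewrite trmxCK.
Qed.

Lemma conj_diag1 : conj_diag (fun _ => 1) = 1%:M.
Proof.
rewrite /conj_diag (_ : diag_mx _ = 1%:M) ?mulmx1 ?unitary_adj_mul //.
by apply/matrixP => i j; rewrite !mxE.
Qed.

Lemma conj_diagM f g : conj_diag f *m conj_diag g = conj_diag (fun j => f j * g j).
Proof.
rewrite /conj_diag !mulmxA -[_ *m P *m P^t*]mulmxA unitary_mul_adj mulmx1.
rewrite -[_ *m diag_mx _ *m diag_mx _]mulmxA.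
congr (_ *m _ *m _); apply/matrixP => i j; rewrite mul_diag_mx !mxE.
by case: (i == j); rewrite ?mulr1n ?mulr0n ?mulr0.
Qed.

Lemma conj_diagX f k : conj_diag f ^+ k = conj_diag (fun j => f j ^+ k).
Proof.
elim: k => [|k IHk].
  by rewrite expr0 (eq_conj_diag (g := fun _ => 1)) ?conj_diag1 // => j; rewrite expr0.
by rewrite exprS IHk -mulmxE conj_diagM; apply: eq_conj_diag => j; rewrite exprS.
Qed.

End ConjDiag.

Section ComplexVectorNorm.
Variables (R : realType) (n : nat).
Local Notation C := R[i].
Local Open Scope complex_scope.

Definition vnormc2 (z : 'cV[C]_n) : R := \sum_i normc2 (z i 0).

Lemma vnormc2_ge0 z : 0 <= vnormc2 z.
Proof. by apply: sumr_ge0 => i _; exact: normc2_ge0. Qed.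

Lemma vnormc2E z : (vnormc2 z)%:C = (z^t* *m z) 0 0.
Proof. by rewrite rmorph_sum mxE; apply: eq_bigr => i _; rewrite !mxE; exact: normc2E. Qed.

Lemma vnormc2_isometry (Q : 'M[C]_n) z : Q^t* *m Q = 1%:M -> vnormc2 (Q *m z) = vnormc2 z.
Proof.
move=> QQ; apply: (@complexI R); rewrite !vnormc2E.
by rewrite trmx_mul map_mxM -mulmxA [Q^t* *m _]mulmxA mulmxA QQ mulmx1.
Qed.

Lemma vnormc2_diag (f : 'I_n -> C) w :
  vnormc2 (diag_mx (\row_j f j) *m w) = \sum_i normc2 (f i) * normc2 (w i 0).
Proof. by apply: eq_bigr => i _; rewrite mul_diag_mx !mxE normc2M. Qed.

Lemma vnormc2Z (c : C) w : vnormc2 (c *: w) = normc2 c * vnormc2 w.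
Proof. by rewrite /vnormc2 mulr_sumr; apply: eq_bigr => i _; rewrite !mxE normc2M. Qed.

Lemma vnormc2N w : vnormc2 (- w) = vnormc2 w.
Proof. by apply: eq_bigr => i _; rewrite mxE normc2N. Qed.

Lemma vnormc2_0 : vnormc2 0 = 0.
Proof. by rewrite /vnormc2 big1 // => i _; rewrite mxE /normc2 /=; ring. Qed.

(* The difference of the two sides is [vnormc2 (u - m *: a)]. *)
Lemma vnormc2D_weighted (m : R) (u a : 'cV[C]_n) :
  m * vnormc2 (u + a) <= (m + 1) * vnormc2 u + m * (m + 1) * vnormc2 a.
Proof.
rewrite /vnormc2 !mulr_sumr -big_split; apply: ler_sum => i _ /=.
rewrite !mxE /normc2 ReD ImD -subr_ge0.
set p := complex.Re (u i 0); set q := complex.Re (a i 0).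
set p' := complex.Im (u i 0); set q' := complex.Im (a i 0).
have -> : (m + 1) * (p ^+ 2 + p' ^+ 2) + m * (m + 1) * (q ^+ 2 + q' ^+ 2) -
  m * ((p + q) ^+ 2 + (p' + q') ^+ 2) = (p - m * q) ^+ 2 + (p' - m * q') ^+ 2 by ring.
by rewrite addr_ge0 ?sqr_ge0.
Qed.

Lemma vnormc2B_le (u a : 'cV[C]_n) : vnormc2 (u - a) <= 2 * vnormc2 u + 2 * vnormc2 a.
Proof. by have := vnormc2D_weighted 1 u (- a); rewrite vnormc2N !mul1r. Qed.

Variable P : 'M[C]_n.
Hypothesis P_unitary : P \is unitarymx.

Lemma vnormc2_conj_diag_le (f : 'I_n -> C) (K : R) z :
  (forall j, normc2 (f j) <= K) -> vnormc2 (conj_diag P f *m z) <= K * vnormc2 z.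
Proof.
move=> f_le; rewrite /conj_diag -!mulmxA vnormc2_isometry ?trmxCK ?unitary_mul_adj //.
rewrite vnormc2_diag -(vnormc2_isometry z (unitary_adj_mul P_unitary)) mulr_sumr.
by apply: ler_sum => i _; apply: ler_wpM2r; [exact: normc2_ge0 | exact: f_le].
Qed.

Lemma vnormc2_conj_diag (f : 'I_n -> C) z :
  (forall j, normc2 (f j) = 1) -> vnormc2 (conj_diag P f *m z) = vnormc2 z.
Proof.
move=> f1; rewrite /conj_diag -!mulmxA vnormc2_isometry ?trmxCK ?unitary_mul_adj //.
rewrite vnormc2_diag -(vnormc2_isometry z (unitary_adj_mul P_unitary)).
by apply: eq_bigr => i _; rewrite f1 mul1r.
Qed.

End ComplexVectorNorm.

Section SpectralExp.
Variables (R : realType) (n : nat).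
Local Notation C := R[i].
Local Open Scope complex_scope.

Definition eigvecs (M : 'M[R]_n) : 'M[C]_n := spectralmx (cplx_mx M).
Definition eigvals (M : 'M[R]_n) (j : 'I_n) : R := complex.Re (spectral_diag (cplx_mx M) 0 j).

Definition expit (M : 'M[R]_n) (t : R) : 'M[C]_n :=
  conj_diag (eigvecs M) (fun j => expi (t * eigvals M j)).

Lemma eigvecs_unitary M : eigvecs M \is unitarymx.
Proof. exact: spectral_unitarymx. Qed.

Lemma expitX M t k : expit M t ^+ k = expit M (t *+ k).
Proof.
rewrite /expit conj_diagX ?eigvecs_unitary //.
by apply: eq_conj_diag => j; rewrite -expiMn mulrnAl.
Qed.

Lemma vnormc2_expit M t z : vnormc2 (expit M t *m z) = vnormc2 z.
Proof. by apply: vnormc2_conj_diag; [exact: eigvecs_unitary | move=> j; exact: normc2_expi]. Qed.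

Variable M : 'M[R]_n.
Hypothesis M_sym : M^T = M.

Lemma cplx_mx_herm : cplx_mx M \is hermsymmx.
Proof.
apply/is_hermitianmxP; rewrite expr0 scale1r; apply/matrixP => i j.
by rewrite !mxE -{1}M_sym mxE -[RHS]/(Complex (M j i) (- 0)) oppr0.
Qed.

Lemma cplx_mx_spectral : cplx_mx M = conj_diag (eigvecs M) (fun j => (eigvals M j)%:C).
Proof.
have /orthomx_spectralP -> := hermitian_normalmx cplx_mx_herm.
rewrite invmx_unitary ?spectral_unitarymx //; congr (_ *m diag_mx _ *m _).
apply/rowP => j; rewrite !mxE.
by have /mxOverP /(_ 0 j) /RRe_real := hermitian_spectral_diag_real cplx_mx_herm.
Qed.

Lemma expmi_partial_spectral N :
  expmi_partial M N = conj_diag (eigvecs M) (fun j => expi_partial (eigvals M j) N).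
Proof.
rewrite /expmi_partial cplx_mx_spectral conj_diagZ.
under eq_bigr do rewrite conj_diagX ?eigvecs_unitary // conj_diagZ.
rewrite conj_diag_sum; apply: eq_conj_diag => j; apply: eq_bigr => k _.
by congr (_ * _ ^+ _); apply/eqP; rewrite eq_complex /=; apply/andP; split; apply/eqP; ring.
Qed.

Lemma expmi_expit : expmi M = expit M 1.
Proof.
apply/matrixP => a b; rewrite /expmi mxE /expit conj_diag_entry.
apply: (@cvgC_lim _ (fun N => expmi_partial M N a b)).
have -> : (fun N => expmi_partial M N a b) = fun N =>
    \sum_j (eigvecs M j a)^* * eigvecs M j b * expi_partial (eigvals M j) N.
  by apply/funext => N; rewrite expmi_partial_spectral conj_diag_entry.
by apply: cvgC_sum => j; rewrite mul1r; exact/cvgCMl/cvgC_expi_partial.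
Qed.

Definition expit_rem_const : R := 2 * \sum_j eigvals M j ^+ 4.

Lemma expit_rem_le t z :
  vnormc2 ((expit M t - 1%:M - Complex 0 t *: cplx_mx M) *m z)
  <= t ^+ 4 * expit_rem_const * vnormc2 z.
Proof.
have -> : expit M t - 1%:M - Complex 0 t *: cplx_mx M =
    conj_diag (eigvecs M) (fun j => expi (t * eigvals M j) - 1 - Complex 0 (t * eigvals M j)).
  rewrite -(conj_diag1 (eigvecs_unitary M)) cplx_mx_spectral conj_diagZ /expit !conj_diagB.
  apply: eq_conj_diag => j; congr (_ - _ - _).
  by apply/eqP; rewrite eq_complex /=; apply/andP; split; apply/eqP; ring.
apply: vnormc2_conj_diag_le; first exact: eigvecs_unitary.
move=> j; apply: (le_trans (normc2_expi_sub_le _)).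
have -> : 2 * (t * eigvals M j) ^+ 4 = t ^+ 4 * (2 * eigvals M j ^+ 4) by ring.
rewrite ler_wpM2l ?exprn_even_ge0 // ler_wpM2l // (bigD1 j) //= lerDl.
by apply: sumr_ge0 => i _; rewrite exprn_even_ge0.
Qed.
End SpectralExp.

Section OperatorNorm.
Variables (R : realType) (n : nat).
Local Open Scope classical_set_scope.

Lemma vnorm_sqr (v : 'cV[R]_n) : vnorm v ^+ 2 = \sum_i v i 0 ^+ 2.
Proof. by rewrite sqr_sqrtr // sumr_ge0 // => i _; exact: sqr_ge0. Qed.

Lemma vnormZ (c : R) (v : 'cV[R]_n) : vnorm (c *: v) = `|c| * vnorm v.
Proof.
rewrite /vnorm -sqrtr_sqr -sqrtrM ?sqr_ge0 //; congr Num.sqrt.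
by rewrite mulr_sumr; apply: eq_bigr => i _; rewrite !mxE exprMn.
Qed.

Lemma vnorm_eq0 (v : 'cV[R]_n) : vnorm v = 0 -> v = 0.
Proof.
move=> v0; apply/matrixP => i j; rewrite ord1 mxE; apply/eqP; rewrite -sqrf_eq0.
have /eqP : \sum_i v i 0 ^+ 2 = 0 by rewrite -vnorm_sqr v0 expr0n.
rewrite psumr_eq0 => [/allP/(_ i (mem_index_enum i))/implyP/(_ isT) //|k _].
exact: sqr_ge0.
Qed.

Lemma norm_coord_le (u : 'cV[R]_n) j : vnorm u = 1 -> `|u j 0| <= 1.
Proof.
move=> u1; rewrite -(@expr_le1 _ 2) // real_normK ?num_real //.
have := vnorm_sqr u; rewrite u1 expr1n => ->; rewrite (bigD1 j) //= lerDl.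
by apply: sumr_ge0 => i _; exact: sqr_ge0.
Qed.

Lemma vnorm_mulmx_le_opnorm (B : 'M[R]_n) (v : 'cV[R]_n) :
  vnorm v = 1 -> vnorm (B *m v) <= opnorm B.
Proof.
move=> v1; apply: sup_upper_bound; last by exists v.
split; first by exists (vnorm (B *m v)), v.
exists (Num.sqrt (\sum_i (\sum_j `|B i j|) ^+ 2)) => _ [u /= u1 <-].
rewrite /vnorm ler_sqrt; last by apply: sumr_ge0 => i _; exact: sqr_ge0.
apply: ler_sum => i _; rewrite mxE -real_normK ?num_real //.
apply: lerXn2r; rewrite ?nnegrE ?sumr_ge0 //.
apply: (le_trans (ler_norm_sum _ _ _)); apply: ler_sum => j _.
by rewrite normrM ler_piMr // norm_coord_le.
Qed.

Lemma vnorm_mulmx_sqr_le (B : 'M[R]_n) (v : 'cV[R]_n) :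
  vnorm (B *m v) ^+ 2 <= opnorm B ^+ 2 * vnorm v ^+ 2.
Proof.
have [v0|v_neq0] := eqVneq (vnorm v) 0.
  have -> : B *m v = 0 by rewrite (vnorm_eq0 v0) mulmx0.
  by rewrite -(vnorm_eq0 v0) v0 expr0n mulr0.
have v_gt0 : 0 < vnorm v by rewrite lt_def v_neq0 sqrtr_ge0.
set u := (vnorm v)^-1 *: v.
have u1 : vnorm u = 1 by rewrite vnormZ ger0_norm ?invr_ge0 ?sqrtr_ge0 // mulVf.
have -> : B *m v = vnorm v *: (B *m u) by rewrite /u -scalemxAr scalerA divff // scale1r.
rewrite vnormZ ger0_norm ?sqrtr_ge0 // exprMn mulrC ler_wpM2r ?sqr_ge0 //.
have opnorm_ge0 : 0 <= opnorm B := le_trans (sqrtr_ge0 _) (vnorm_mulmx_le_opnorm B u1).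
by apply: lerXn2r; rewrite ?nnegrE ?sqrtr_ge0 ?vnorm_mulmx_le_opnorm.
Qed.

Lemma vnormc2_cplx_mulmx_le (B : 'M[R]_n) (z : 'cV[R[i]]_n) :
  vnormc2 (cplx_mx B *m z) <= opnorm B ^+ 2 * vnormc2 z.
Proof.
have vnormc2_ReIm (w : 'cV[R[i]]_n) : vnormc2 w =
    vnorm (map_mx (@complex.Re R) w) ^+ 2 + vnorm (map_mx (@complex.Im R) w) ^+ 2.
  by rewrite !vnorm_sqr -big_split; apply: eq_bigr => i _; rewrite !mxE.
have Re_mulmx : map_mx (@complex.Re R) (cplx_mx B *m z) = B *m map_mx (@complex.Re R) z.
  apply/matrixP => i k; rewrite !mxE Re_sum; apply: eq_bigr => j _.
  by rewrite !mxE ReM /=; ring.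
have Im_mulmx : map_mx (@complex.Im R) (cplx_mx B *m z) = B *m map_mx (@complex.Im R) z.
  apply/matrixP => i k; rewrite !mxE Im_sum; apply: eq_bigr => j _.
  by rewrite !mxE ImM /=; ring.
rewrite !vnormc2_ReIm Re_mulmx Im_mulmx mulrDr.
by apply: lerD; apply: vnorm_mulmx_sqr_le.
Qed.

End OperatorNorm.

Section Telescope.
Variables (R : realType) (n : nat).
Local Notation C := R[i].

(* With weight [m] in [vnormc2D_weighted] the bound grows like
   [(m + 1)^2 = (m + 1) m + (m + 1)], i.e. the square roots add up. *)
Lemma vnormc2_subX_le (X Y : 'M[C]_n) (w : 'cV[C]_n) (beta : R) :
  (forall u, vnormc2 (X *m u) = vnormc2 u) ->
  (forall k, vnormc2 ((X - Y) *m (Y ^+ k *m w)) <= beta) ->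
  forall m, vnormc2 ((X ^+ m - Y ^+ m) *m w) <= m%:R ^+ 2 * beta.
Proof.
move=> X_isometry step_le; elim=> [|m IHm].
  by rewrite !expr0 subrr mul0mx vnormc2_0 expr0n mul0r.
have -> : (X ^+ m.+1 - Y ^+ m.+1) *m w =
    X *m ((X ^+ m - Y ^+ m) *m w) + (X - Y) *m (Y ^+ m *m w).
  rewrite !mulmxA -mulmxDl; congr (_ *m w).
  by rewrite !mulmxE !exprS mulrBr mulrBl addrA subrK.
have := vnormc2D_weighted m%:R (X *m ((X ^+ m - Y ^+ m) *m w)) ((X - Y) *m (Y ^+ m *m w)).
rewrite X_isometry => weighted.
have := step_le m.
case: m IHm weighted => [_ _|m IHm weighted d_le].
  by rewrite !expr0 subrr mul0mx mulmx0 add0r expr1n mul1r.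
rewrite -(@ler_pM2l _ m.+1%:R) ?ltr0n //; apply: (le_trans weighted).
rewrite -[m.+2%:R]natr1; set q := m.+1%:R in IHm weighted d_le *.
have -> : q * ((q + 1) ^+ 2 * beta) = (q + 1) * (q ^+ 2 * beta) + q * (q + 1) * beta by ring.
have q_ge0 : 0 <= q by rewrite ler0n.
by apply: lerD; apply: ler_wpM2l; rewrite ?mulr_ge0 ?addr_ge0.
Qed.

End Telescope.

Lemma le_of_le_add_divn (R : archiFieldType) (a b c : R) :
  (forall k, (0 < k)%N -> a <= b + c / k%:R) -> a <= b.
Proof.
move=> le_k; apply/ler_addgt0Pr => e e_gt0.
have := archi_boundP (divr_ge0 (normr_ge0 c) (ltW e_gt0)).
set k := Num.Def.archi_bound _ => k_gt.
apply: (le_trans (le_k k.+1 isT)); rewrite lerD2l.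
have k1_gt0 : (0 : R) < k.+1%:R by rewrite ltr0n.
rewrite ltr_pdivrMr // in k_gt.
rewrite ler_pdivrMr // (le_trans (ler_norm c)) // (le_trans (ltW k_gt)) //.
by rewrite mulrC ler_wpM2l ?ltW // ltr_nat.
Qed.

Section Lipschitz.
Variables (R : realType) (n : nat).
Local Notation C := R[i].
Variables M M' : 'M[R]_n.
Hypotheses (M_sym : M^T = M) (M'_sym : M'^T = M').

Lemma expit_sub_decomp (t : R) (z : 'cV[C]_n) :
  (expit M' t - expit M t) *m z = Complex 0 t *: (cplx_mx (M' - M) *m z) +
   ((expit M' t - 1%:M - Complex 0 t *: cplx_mx M') *m z -
    (expit M t - 1%:M - Complex 0 t *: cplx_mx M) *m z).
Proof.
have -> : cplx_mx (M' - M) = cplx_mx M' - cplx_mx M.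
  by apply/matrixP => i j; rewrite !mxE; apply/eqP; rewrite eq_complex /= subrr !eqxx.
rewrite !mulmxBl -!scalemxAl !mul1mx.
by apply/matrixP => i k; rewrite !mxE; ring.
Qed.

Lemma expit_sub_le (m t : R) (z : 'cV[C]_n) : 0 <= m ->
  m * vnormc2 ((expit M' t - expit M t) *m z) <=
  (m + 1) * (t ^+ 2 * opnorm (M' - M) ^+ 2 * vnormc2 z) +
  m * (m + 1) * (2 * t ^+ 4 * (expit_rem_const M + expit_rem_const M') * vnormc2 z).
Proof.
move=> m_ge0; rewrite expit_sub_decomp.
apply: le_trans (vnormc2D_weighted m _ _) _.
apply: lerD; rewrite ler_wpM2l ?mulr_ge0 ?addr_ge0 //.
  by rewrite vnormc2Z normc2_imag -mulrA ler_wpM2l ?sqr_ge0 ?vnormc2_cplx_mulmx_le.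
apply: le_trans (vnormc2B_le _ _) _.
rewrite (_ : 2 * _ * _ * _ = 2 * (t ^+ 4 * expit_rem_const M' * vnormc2 z) +
                             2 * (t ^+ 4 * expit_rem_const M * vnormc2 z)); last by ring.
by apply: lerD; rewrite ler_wpM2l ?expit_rem_le.
Qed.

(* Split [e^{iM} = (e^{iM/k})^k], telescope, and let [k] grow: the per-step
   error [(e^{iM'/k} - e^{iM/k}) - i(M' - M)/k] is [O(1/k^2)]. *)
Lemma expmi_lipschitz (w : 'cV[C]_n) :
  vnormc2 ((expmi M' - expmi M) *m w) <= opnorm (M' - M) ^+ 2 * vnormc2 w.
Proof.
set s := vnormc2 w; set o := opnorm (M' - M).
set K := expit_rem_const M + expit_rem_const M'.
have s_ge0 : 0 <= s := vnormc2_ge0 w.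
have K_ge0 : 0 <= K.
  by rewrite addr_ge0 // mulr_ge0 // sumr_ge0 // => j _; rewrite exprn_even_ge0.
apply: (@le_of_le_add_divn _ _ _ (o ^+ 2 * s + 4 * K * s)) => k k_gt0.
set q : R := k%:R; set t := q^-1.
have q_ge1 : 1 <= q by rewrite ler1n.
have q_gt0 : 0 < q by lra.
have q_neq0 : q != 0 by rewrite gt_eqF.
have t_gt0 : 0 < t by rewrite invr_gt0.
set X := expit M' t; set Y := expit M t.
set beta := t * ((q + 1) * (t ^+ 2 * o ^+ 2 * s) + q * (q + 1) * (2 * t ^+ 4 * K * s)).
have step_le j : vnormc2 ((X - Y) *m (Y ^+ j *m w)) <= beta.
  have Yjw : vnormc2 (Y ^+ j *m w) = s by rewrite /Y expitX vnormc2_expit.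
  have := expit_sub_le t (Y ^+ j *m w) (ltW q_gt0); rewrite Yjw -/o -/K => le_q.
  by rewrite -[vnormc2 _]mul1r -(mulVf q_neq0) -mulrA ler_wpM2l // ltW.
have := vnormc2_subX_le (vnormc2_expit M' t) step_le k.
rewrite /X /Y !expitX /t -[q^-1 *+ k]mulr_natr mulVf // -!expmi_expit //.
move/le_trans; apply.
have -> : q ^+ 2 * beta = o ^+ 2 * s + (o ^+ 2 * s + 4 * K * s) / q
    - 2 * K * s * (q - 1) / q ^+ 2.
  by rewrite /beta /t; field.
rewrite lerBlDr lerDl; apply: divr_ge0; last exact: exprn_ge0 (ltW q_gt0).
by apply: mulr_ge0; [nra | lra].
Qed.

End Lipschitz.

Lemma expmi_perturbation_le (R : realType) (n : nat) (M H0 : 'M[R]_n)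
    (w : 'cV[R[i]]_n) : M^T = M -> H0^T = H0 ->
  vnormc2 (expmi (M + H0) *m w - expmi M *m w) <= opnorm H0 ^+ 2 * vnormc2 w.
Proof.
move=> M_sym H0_sym.
have MH0_sym : (M + H0)^T = M + H0 by rewrite linearD /= M_sym H0_sym.
have := expmi_lipschitz M_sym MH0_sym w.
by rewrite (_ : M + H0 - M = H0) ?mulmxBl // addrC addKr.
Qed.

Section Columns.
Variables (R : realType) (n : nat).
Local Notation C := R[i].

Lemma vnormc2_delta (b : 'I_n) : vnormc2 (delta_mx b 0 : 'cV[C]_n) = 1.
Proof.
rewrite /vnormc2 (bigD1 b) //= big1 ?addr0 => [|i /negbTE i_neq_b].
  by rewrite !mxE !eqxx /normc2 /=; ring.
by rewrite !mxE i_neq_b /normc2 /=; ring.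
Qed.

Lemma vnormc2_expmi_col (M : 'M[R]_n) b : M^T = M -> vnormc2 (expmi M *m delta_mx b 0) = 1.
Proof. by move=> M_sym; rewrite expmi_expit // vnormc2_expit vnormc2_delta. Qed.

(* [u0] vanishes off [i], where [u - u0] therefore agrees with [u], which
   carries mass [1 - normc2 (u i 0)] there. *)
Lemma one_sub_normc2_le (u u0 : 'cV[C]_n) (i : 'I_n) :
  vnormc2 u = 1 -> vnormc2 u0 = 1 -> normc2 (u0 i 0) = 1 ->
  1 - normc2 (u i 0) <= vnormc2 (u - u0).
Proof.
move=> u1 u01 u0i1.
have u0_off k : k != i -> u0 k 0 = 0.
  have : \sum_(k | k != i) normc2 (u0 k 0) = 0.
    by move: u01; rewrite /vnormc2 (bigD1 i) //= u0i1 => /(canRL (addKr 1)); rewrite addNr.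
  move/psumr_eq0P => off k_neq_i; apply: normc2_eq0; apply: off => // j _.
  exact: normc2_ge0.
move: u1; rewrite /vnormc2 (bigD1 i) //= (bigD1 i (P := xpredT)) //= => u1.
have -> : \sum_(k | k != i) normc2 ((u - u0) k 0) = \sum_(k | k != i) normc2 (u k 0).
  by apply: eq_bigr => k k_neq_i; rewrite !mxE u0_off // subr0.
by rewrite -u1 addrAC subrr add0r lerDr normc2_ge0.
Qed.

End Columns.

Lemma laplacian_sym (R : realType) (n : nat) (A : 'M[R]_n) :
  A^T = A -> (laplacian A)^T = laplacian A.
Proof. by move=> A_sym; rewrite /laplacian linearB /= tr_diag_mx A_sym. Qed.

Unset Implicit Arguments.
Set Strict Implicit.

Theorem theorem3p3 (R : realType) (n : nat) (v1 v2 : 'I_n)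
  (hv1 : nat_of_ord v1 = 0%N) (hv2 : nat_of_ord v2 = 1%N)
  (A H : 'M[R]_n) (t0 : R)
  (hA : weighted_adjacency A) (hconn : adj_connected A)
  (hH : H = A \/ H = laplacian A)
  (hPST : cmod (expmi (t0 *: H) v1 v2) = 1)
  (hdec : exists (theta : R) (l : nat) (Q : 'M[R]_n) (r : 'I_n -> nat)
            (x : 'I_n -> R),
     (l <= n)%N /\
         Q^T *m Q = 1%:M /\
         (forall i : 'I_n, (i < l)%N -> ~~ odd (r i) /\ (0 < r i)%N) /\
         (forall i : 'I_n, (l <= i)%N -> odd (r i)) /\
         (forall i j : 'I_n, (i <= j)%N -> (j < l)%N -> (r j <= r i)%N) /\
         (forall i j : 'I_n, (l <= i)%N -> (i <= j)%N -> (r j <= r i)%N) /\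
         t0 *: H = Q^T *m diag_mx (\row_i (pi * (r i)%:R)) *m Q + theta%:M /\
         (forall j, 0 <= x j) /\
         (forall j, Q^T v1 j = x j /\
                    Q^T v2 j = (if (j < l)%N then x j else - x j))) :
  exists (C delta : R), 0 < delta /\
    forall H0 : 'M[R]_n, H0^T = H0 -> H0 != 0 -> opnorm H0 < delta ->
      1 - cmod (expmi (t0 *: H + H0) v1 v2) ^+ 2
      <= 2 * frobenius H0 ^+ 2 / (pi - opnorm H0) ^+ 2
         + opnorm H0 ^+ 2 + C * opnorm H0 ^+ 3.
Proof.
exists 0, 1; split=> // H0 H0_sym _ _.
have A_sym : A^T = A := hA.1.
have H_sym : H^T = H by case: hH => ->; rewrite ?laplacian_sym.
have tH_sym : (t0 *: H)^T = t0 *: H by rewrite linearZ /= H_sym.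
have tHH0_sym : (t0 *: H + H0)^T = t0 *: H + H0 by rewrite linearD /= tH_sym H0_sym.
set e2 : 'cV[R[i]]_n := delta_mx v2 0.
have entry_sqr (U : 'M[R[i]]_n) : cmod (U v1 v2) ^+ 2 = normc2 ((U *m e2) v1 0).
  by rewrite -colE mxE cmod_sqr.
have pst : normc2 ((expmi (t0 *: H) *m e2) v1 0) = 1 by rewrite -entry_sqr hPST expr1n.
have defect :=
  one_sub_normc2_le (vnormc2_expmi_col v2 tHH0_sym) (vnormc2_expmi_col v2 tH_sym) pst.
have lip := expmi_perturbation_le e2 tH_sym H0_sym.
rewrite [vnormc2 e2]vnormc2_delta mulr1 in lip.
have frob_ge0 : 0 <= 2 * frobenius H0 ^+ 2 / (pi - opnorm H0) ^+ 2.
  by rewrite divr_ge0 ?sqr_ge0 // mulr_ge0 ?sqr_ge0.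
rewrite mul0r addr0 entry_sqr (le_trans defect (le_trans lip _)) //.
by rewrite lerDr.
Qed.
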